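(* Let $n\ge 1$ and let $\|\cdot\|$ be a norm on $\mathbb{R}^n$ that is $C^\infty$ on $\mathbb{R}^n\setminus\{0\}$. Let $G^n$ be the group (under composition) of all $C^\infty$ diffeomorphisms $\mathbf{Y}:\mathbb{R}^n\setminus\{0\}\to\mathbb{R}^n\setminus\{0\}$ with $\mathbf{Y}(\lambda\mathbf{x})=\lambda\mathbf{Y}(\mathbf{x})$ for all $\mathbf{x}\ne0$, $\lambda\in\mathbb{R}\setminus\{0\}$, with product $\mathbf{Y}_{g_1g_2}=\mathbf{Y}_{g_1}\circ\mathbf{Y}_{g_2}$. Let $N^n\subset G^n$ consist of the elements with $\mathbf{Y}_g(\mathbf{x})=\mathbf{x}\,r_g(\mathbf{x})$ for a $C^\infty$ function $r_g:\mathbb{R}^n\setminus\{0\}\to(0,\infty)$ satisfying $r_g(\lambda\mathbf{x})=r_g(\mathbf{x})$ for all $\lambda\in\mathbb{R}\setminus\{0\}$. Let $H^n\subset G^n$ be the subgroup of elements $h$ with $\|\mathbf{Y}_h(\mathbf{x})\|=\|\mathbf{x}\|$ and $\mathbf{Y}_h(-\mathbf{x})=-\mathbf{Y}_h(\mathbf{x})$ for all $\mathbf{x}\ne 0$. Then every $g\in G^n$ has a unique representation $g=h\,g_N$ with $h\in H^n$ and $g_N\in N^n$, i.e. $\mathbf{Y}_g=\mathbf{Y}_h\circ\mathbf{Y}_{g_N}$.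
   Context: $G^n$ is the group of Thermodynamic Coordinate Transformations (homogeneous degree-one diffeomorphisms of $\mathbb{R}^n\setminus\{0\}$); elements are identified with their maps and the group law is composition. *)

From HB Require Import structures.
From mathcomp Require Import all_boot all_order all_algebra.
From mathcomp Require Import all_classical all_reals all_analysis.
Set Implicit Arguments. Unset Strict Implicit. Unset Printing Implicit Defensive.
Import Order.TTheory GRing.Theory Num.Theory.
Import numFieldNormedType.Exports.
Local Open Scope ring_scope.

Fixpoint iterD (R : realType) (V W : normedModType R) (vs : seq V) (f : V -> W)
  : V -> W :=
  match vs with
  | [::] => f
  | v :: vs' => fun x => 'D_v (iterD vs' f) x
  end.

Definition smooth_on (R : realType) (V W : normedModType R) (U : set V)
  (f : V -> W) : Prop :=
  forall (vs : seq V) (x : V), U x -> differentiable (iterD vs f) x.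

Definition punct (R : realType) (n : nat) : set 'rV[R]_n :=
  [set x | x != 0].

Definition is_norm (R : realType) (n : nat) (N : 'rV[R]_n -> R) : Prop :=
  (forall x, N x = 0 -> x = 0) /\
  (forall (a : R) x, N (a *: x) = `|a| * N x) /\
  (forall x y, N (x + y) <= N x + N y).

(* elements of G^n : homogeneous degree-one C^infinity diffeomorphisms of
   R^n \ {0} (values at 0 are irrelevant) *)
Definition inG (R : realType) (n : nat) (Y : 'rV[R]_n -> 'rV[R]_n) : Prop :=
  (forall x, x != 0 -> Y x != 0) /\
  smooth_on (@punct R n) Y /\
  (exists Yi : 'rV[R]_n -> 'rV[R]_n,
     (forall x, x != 0 -> Yi x != 0) /\
     smooth_on (@punct R n) Yi /\
     (forall x, x != 0 -> Yi (Y x) = x) /\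
     (forall x, x != 0 -> Y (Yi x) = x)) /\
  (forall (l : R) x, x != 0 -> l != 0 -> Y (l *: x) = l *: Y x).

Definition inN (R : realType) (n : nat) (Y : 'rV[R]_n -> 'rV[R]_n) : Prop :=
  inG Y /\
  exists r : 'rV[R]_n -> R,
    smooth_on (@punct R n) r /\
    (forall x, x != 0 -> 0 < r x) /\
    (forall (l : R) x, x != 0 -> l != 0 -> r (l *: x) = r x) /\
    (forall x, x != 0 -> Y x = r x *: x).

Definition inH (R : realType) (n : nat) (N : 'rV[R]_n -> R)
  (Y : 'rV[R]_n -> 'rV[R]_n) : Prop :=
  inG Y /\
  (forall x, x != 0 -> N (Y x) = N x) /\
  (forall x, x != 0 -> Y (- x) = - Y x).

From Pilot Require Import Defs.
From HB Require Import structures.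
From mathcomp Require Import all_boot all_order all_algebra.
From mathcomp Require Import all_classical all_reals all_analysis.
From mathcomp Require Import lra.
Import Order.TTheory GRing.Theory Num.Theory.
Import numFieldNormedType.Exports.
Local Open Scope ring_scope.

(* Uniqueness: h preserves the norm and g_N x = r(x) x with r > 0, so
   ||Y x|| = r(x) ||x||; this forces r = ||Y x|| / ||x||, and then
   h = Y o g_N^-1.  Existence: this ratio is smooth, positive and
   0-homogeneous, so x |-> r(x) x lies in N^n, and h := Y o (x |-> r(x)^-1 x)
   preserves the norm and is odd.  Smoothness of all these maps follows from
   the closure of C^k maps on an open set under sums, products, inverses,
   scalings and compositions, by induction on k. *)

Section NearDifferentiable.
Context {R : realType} {V W : normedModType R}.

Lemma near_eq_differentiable (f g : V -> W) (x : V) :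
  (\forall y \near x, f y = g y) -> differentiable f x -> differentiable g x.
Proof.
move=> fg df.
have fgx : f x = g x := nbhs_singleton fg.
have fg0 : \forall h \near (0 : V), f (h + x) = g (h + x).
  by rewrite nbhs0P in fg; near=> h; rewrite addrC; near: h.
have g_expansion : g \o shift x = cst (g x) + 'd f x +o_ (0 : V) id.
  apply/eqaddoP => e e0.
  have /eqaddoP := diff_locally df => /(_ e e0) Hf.
  move: Hf fg0; apply: filterS2 => h Hh Eh.
  by move: Hh; rewrite !fctE /= -Eh fgx.
have dgf : 'd g x = 'd f x :> (V -> W).
  by apply: diff_unique => //; exact: diff_continuous.
by apply/diff_locallyP; rewrite dgf; split => //; exact: diff_continuous.
Unshelve. all: by end_near. Qed.

End NearDifferentiable.

Section Ck.
Context {R : realType} {V W : normedModType R}.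
Implicit Types (U : set V) (f g : V -> W).

Lemma iterD_rcons (vs : seq V) (v : V) f :
  Defs.iterD (rcons vs v) f = Defs.iterD vs ('D_v f).
Proof. by elim: vs => [//|w vs IH] /=; rewrite IH. Qed.

Definition Ck (k : nat) U f :=
  forall (vs : seq V) x, (size vs <= k)%N -> U x -> differentiable (Defs.iterD vs f) x.

Definition smooth U f := forall k, Ck k U f.

Lemma smooth_onE U f : smooth_on U f <-> smooth U f.
Proof.
split=> [Hf k vs x _ Ux|Hf vs x Ux]; first exact: Hf.
exact: (Hf (size vs)).
Qed.

Lemma CkW k U f : Ck k.+1 U f -> Ck k U f.
Proof. by move=> Hf vs x sk; apply: Hf; apply: leqW. Qed.

Lemma Ck0 U f : Ck 0 U f <-> (forall x, U x -> differentiable f x).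
Proof. by split=> [Hf x Ux|Hf [|//] x _ Ux]; [exact: (Hf [::])|exact: Hf]. Qed.

Lemma CkS k U f : Ck k.+1 U f <->
  (forall x, U x -> differentiable f x) /\ (forall v, Ck k U ('D_v f)).
Proof.
split=> [Hf|[df Hf] vs x]; first split.
- by move=> x Ux; apply: (Hf [::]).
- move=> v vs x sk Ux; rewrite -iterD_rcons.
  by apply: Hf => //; rewrite size_rcons.
- case/lastP: vs => [_ Ux|vs v]; first exact: df.
  by rewrite size_rcons ltnS iterD_rcons => sk Ux; exact: Hf.
Qed.

Lemma smooth_derive U f v : smooth U f -> smooth U ('D_v f).
Proof. by move=> Hf k; have /CkS[_] := Hf k.+1; apply. Qed.

Lemma smooth_differentiable U f x : smooth U f -> U x -> differentiable f x.
Proof. by move=> Hf; exact: (Ck0 U f).1 (Hf 0%N) x. Qed.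

Variables (U : set V) (oU : open U).

Lemma iterD_eq_on f g : {in U, f =1 g} ->
  forall vs x, U x -> Defs.iterD vs f x = Defs.iterD vs g x.
Proof.
move=> fg vs; elim: vs => [|v vs IH] x Ux /=; first exact/fg/mem_set.
apply: near_eq_derive.
have : nbhs x U by apply: open_nbhs_nbhs; split.
by apply: filterS => y; apply: IH.
Qed.

Lemma Ck_eq_on k f g : {in U, f =1 g} -> Ck k U f -> Ck k U g.
Proof.
move=> fg Hf vs x sk Ux.
apply: near_eq_differentiable (Hf vs x sk Ux).
have : nbhs x U by apply: open_nbhs_nbhs; split.
by apply: filterS => y; apply: iterD_eq_on.
Qed.

Lemma Ck_cst k (c : W) : Ck k U (cst c).
Proof.
elim: k c => [|k IH] c; first by apply/Ck0 => x _; exact: differentiable_cst.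
apply/CkS; split=> [x _|v]; first exact: differentiable_cst.
have -> : 'D_v (cst c) = cst (0 : W) by apply/funext => x; rewrite derive_cst.
exact: IH.
Qed.

Lemma Ck_add k f g : Ck k U f -> Ck k U g -> Ck k U (fun x => f x + g x).
Proof.
elim: k f g => [|k IH] f g.
  by move=> /Ck0 Hf /Ck0 Hg; apply/Ck0 => x Ux; apply: differentiableD; auto.
move=> /CkS[df Hf] /CkS[dg Hg]; apply/CkS; split.
  by move=> x Ux; apply: differentiableD; auto.
move=> v; apply: (@Ck_eq_on _ (fun x => 'D_v f x + 'D_v g x)); last exact: IH.
move=> y /[!inE] Uy; rewrite deriveD //; apply: diff_derivable; auto.
Qed.

Lemma Ck_sum k m (F : 'I_m -> V -> W) :
  (forall i, Ck k U (F i)) -> Ck k U (fun x => \sum_(i < m) F i x).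
Proof.
elim: m F => [|m IH] F HF.
  have -> : (fun x => \sum_(i < 0) F i x) = cst 0.
    by apply/funext => x; rewrite big_ord0.
  exact: Ck_cst.
have -> : (fun x => \sum_(i < m.+1) F i x) =
    (fun x => \sum_(i < m) F (widen_ord (leqnSn m) i) x + F ord_max x).
  by apply/funext => x; rewrite big_ord_recr.
by apply: Ck_add => //; exact: IH.
Qed.

End Ck.

Arguments smooth_differentiable {R V W U f x}.
Arguments smooth_derive {R V W U f} v.
Arguments Ck_eq_on {R V W U} oU {k} f {g}.
Arguments Ck_cst {R V W U k} c.
Arguments Ck_add {R V W U} oU {k f g}.
Arguments Ck_sum {R V W U} oU {k m F}.

Section CkScalar.
Context {R : realType} {V : normedModType R}.
Variables (U : set V) (oU : open U).

Lemma Ck_id k : Ck k U (@id V).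
Proof.
have did x : differentiable (@id V) x by [].
case: k => [|k]; first by apply/Ck0.
apply/CkS; split=> [x _|v]; first exact: did.
have -> : 'D_v (@id V) = cst v by apply/funext => x; rewrite derive_id.
exact: Ck_cst.
Qed.

Lemma Ck_scalel (W : normedModType R) k (a : V -> R) (c : W) :
  Ck k U a -> Ck k U (fun x => a x *: c).
Proof.
elim: k a => [|k IH] a.
  by move=> /Ck0 Ha; apply/Ck0 => x Ux; apply: differentiableZl; auto.
move=> /CkS[da Ha]; apply/CkS; split.
  by move=> x Ux; apply: differentiableZl; auto.
move=> v; apply: (Ck_eq_on oU (fun x => 'D_v a x *: c)); last exact: IH.
move=> y /[!inE] Uy; rewrite [RHS]deriveE; last by apply: differentiableZl; auto.
by rewrite diffZl ?deriveE; auto.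
Qed.

Lemma Ck_mul k (a b : V -> R) : Ck k U a -> Ck k U b -> Ck k U (fun x => a x * b x).
Proof.
elim: k a b => [|k IH] a b.
  by move=> /Ck0 Ha /Ck0 Hb; apply/Ck0 => x Ux; apply: differentiableM; auto.
move=> Ha Hb; have [da Ha'] := (CkS k U a).1 Ha; have [db Hb'] := (CkS k U b).1 Hb.
apply/CkS; split; first by move=> x Ux; apply: differentiableM; auto.
move=> v; apply: (Ck_eq_on oU (fun x => a x * 'D_v b x + b x * 'D_v a x)).
  by move=> y /[!inE] Uy; rewrite deriveM //; apply: diff_derivable; auto.
by apply: (Ck_add oU); apply: IH => //; exact: CkW.
Qed.

Lemma smooth_mul (a b : V -> R) :
  smooth U a -> smooth U b -> smooth U (fun x => a x * b x).
Proof. by move=> Ha Hb k; apply: Ck_mul. Qed.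

Lemma smooth_inv (a : V -> R) : smooth U a -> (forall x, U x -> a x != 0) ->
  smooth U (fun x => (a x)^-1).
Proof.
move=> Ha a0 k; have da x : U x -> differentiable a x.
  by move=> Ux; exact: smooth_differentiable Ha Ux.
elim: k => [|k IH].
  by apply/Ck0 => x Ux; apply: differentiableV; auto.
apply/CkS; split; first by move=> x Ux; apply: differentiableV; auto.
move=> v; apply: (Ck_eq_on oU (fun x => -1 * ((a x)^-1 * (a x)^-1) * 'D_v a x)).
  move=> y /[!inE] Uy; rewrite deriveV ?a0 //; last exact/diff_derivable/da.
  by rewrite mulN1r -expr2 exprVn.
apply: Ck_mul; last exact: smooth_derive Ha k.
by apply: Ck_mul; [exact: Ck_cst|exact: Ck_mul].
Qed.

End CkScalar.

Arguments Ck_scalel {R V U} oU {W k a} c.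
Arguments Ck_mul {R V U} oU {k a b}.
Arguments smooth_mul {R V U} oU {a b}.
Arguments smooth_inv {R V U} oU {a}.

Section CkRow.
Context {R : realType} {V : normedModType R}.
Variables (U : set V) (oU : open U).

Lemma Ck_coord k m (F : V -> 'rV[R]_m) i : Ck k U F -> Ck k U (fun x => F x 0 i).
Proof.
have dcoord (G : V -> 'rV[R]_m) x :
    differentiable G x -> differentiable (fun y => G y 0 i) x.
  move=> dG; have -> : (fun y => G y 0 i) = (fun M => M 0 i) \o G by [].
  exact: (differentiable_comp dG (differentiable_coord (G x) 0 i)).
elim: k F => [|k IH] F.
  by move=> /Ck0 HF; apply/Ck0 => x Ux; apply: dcoord; exact: HF.
move=> /CkS[dF HF]; apply/CkS; split=> [x Ux|v]; first by apply: dcoord; exact: dF.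
apply: (Ck_eq_on oU (fun x => 'D_v F x 0 i)); last exact: IH.
move=> y /[!inE] Uy; rewrite derive_mx ?mxE //; apply: diff_derivable; exact: dF.
Qed.

Lemma Ck_of_coord k m (F : V -> 'rV[R]_m) :
  (forall i, Ck k U (fun x => F x 0 i)) -> Ck k U F.
Proof.
move=> HF.
have -> : F = (fun x => \sum_(j < m) F x 0 j *: (delta_mx 0 j : 'rV[R]_m)).
  by apply/funext => x; rewrite [LHS]row_sum_delta.
by apply: Ck_sum => // j; exact: Ck_scalel.
Qed.

Lemma smoothP m (F : V -> 'rV[R]_m) :
  smooth U F <-> forall i, smooth U (fun x => F x 0 i).
Proof.
split=> [HF i k|HF k]; first exact: Ck_coord.
by apply: Ck_of_coord => i; exact: HF.
Qed.

Lemma smooth_scale m (a : V -> R) (F : V -> 'rV[R]_m) :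
  smooth U a -> smooth U F -> smooth U (fun x => a x *: F x).
Proof.
move=> Ha /smoothP HF; apply/smoothP => i.
have -> : (fun x => (a x *: F x) 0 i) = (fun x => a x * F x 0 i).
  by apply/funext => x; rewrite mxE.
exact: smooth_mul.
Qed.

Lemma smooth_comp_scalar m (U' : set 'rV[R]_m) (Y : V -> 'rV[R]_m)
  (f : 'rV[R]_m -> R) :
  smooth U Y -> (forall x, U x -> U' (Y x)) -> smooth U' f -> smooth U (f \o Y).
Proof.
move=> HY YU Hf k; elim: k f Hf => [|k IH] f Hf.
  apply/Ck0 => x Ux; apply: differentiable_comp.
    exact: smooth_differentiable HY Ux.
  exact: smooth_differentiable Hf (YU x Ux).
apply/CkS; split=> [x Ux|v].
  apply: differentiable_comp; first exact: smooth_differentiable HY Ux.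
  exact: smooth_differentiable Hf (YU x Ux).
(* chain rule, with the differential of f expanded in the standard basis *)
apply: (Ck_eq_on oU (fun x => \sum_(i < m)
   'D_v (fun y => Y y 0 i) x * ('D_(delta_mx 0 i : 'rV[R]_m) f \o Y) x)).
  move=> y /[!inE] Uy.
  have dY := smooth_differentiable HY Uy.
  have df := smooth_differentiable Hf (YU y Uy).
  rewrite deriveE; last exact: differentiable_comp.
  rewrite diff_comp // /= -(deriveE _ dY) [X in 'd f (Y y) X]row_sum_delta.
  rewrite linear_sum; apply: eq_bigr => i _.
  by rewrite linearZ /= -(deriveE _ df) derive_mx ?mxE //; exact: diff_derivable.
apply: Ck_sum => // i; apply: Ck_mul => //.
  by apply: (smooth_derive v _ k); move: HY; rewrite smoothP; apply.
by apply: IH; exact: smooth_derive.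
Qed.

End CkRow.

Arguments smoothP {R V U} oU {m F}.
Arguments smooth_scale {R V U} oU {m a F}.
Arguments smooth_comp_scalar {R V U} oU {m U' Y} f.

Lemma smooth_comp {R : realType} {V : normedModType R} {m p : nat}
  {U : set V} {U' : set 'rV[R]_m} {Y : V -> 'rV[R]_m} {F : 'rV[R]_m -> 'rV[R]_p} :
  open U -> open U' ->
  smooth U Y -> (forall x, U x -> U' (Y x)) -> smooth U' F -> smooth U (F \o Y).
Proof.
move=> oU oU' HY YU /(smoothP oU') HF; apply/(smoothP oU) => i.
exact: (smooth_comp_scalar oU (fun M => F M 0 i) HY YU (HF i)).
Qed.

Lemma open_punct (R : realType) n : open (@punct R n).
Proof.
have -> : @punct R n = (~` [set 0])%classic.
  by apply/seteqP; split => x /=; move/eqP.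
rewrite openC; apply/accessible_closed_set1/hausdorff_accessible.
exact: norm_hausdorff.
Qed.

Section Norm.
Context {R : realType} {n : nat} (N : 'rV[R]_n -> R).
Hypothesis normN : is_norm N.

Lemma norm0 : N 0 = 0.
Proof.
by have [_ [NZ _]] := normN; rewrite -(scale0r (0 : 'rV[R]_n)) NZ normr0 mul0r.
Qed.

Lemma norm_ge0 x : 0 <= N x.
Proof.
have [_ [NZ NT]] := normN.
have := NT x (- x); rewrite subrr norm0 -scaleN1r NZ normrN normr1 mul1r.
lra.
Qed.

Lemma norm_gt0 x : x != 0 -> 0 < N x.
Proof.
have [N0 _] := normN.
by move=> x0; rewrite lt0r norm_ge0 andbT; apply: contra x0 => /eqP/N0 ->.
Qed.

End Norm.

Arguments norm_gt0 {R n N} normN {x}.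

Section GroupG.
Context {R : realType} {n : nat}.
Local Notation P := (@punct R n).
Local Notation oP := (open_punct R n).

Lemma inG_comp (Y Z : 'rV[R]_n -> 'rV[R]_n) : inG Y -> inG Z -> inG (Y \o Z).
Proof.
move=> [Y0 [sY [[Yi [Yi0 [sYi [YiY YYi]]]] Yh]]].
move=> [Z0 [sZ [[Zi [Zi0 [sZi [ZiZ ZZi]]]] Zh]]].
split=> [x x0|]; first by apply/Y0/Z0.
split.
  by apply/smooth_onE/(smooth_comp oP oP) => //; apply/smooth_onE.
split; last by move=> l x x0 l0 /=; rewrite Zh // Yh // Z0.
exists (Zi \o Yi); split=> [x x0|]; first by apply/Zi0/Yi0.
split.
  by apply/smooth_onE/(smooth_comp oP oP) => //; apply/smooth_onE.
by split=> x x0 /=; [rewrite YiY ?ZiZ ?Z0|rewrite ZZi ?YYi ?Yi0].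
Qed.

Definition radial (r : 'rV[R]_n -> R) (x : 'rV[R]_n) := r x *: x.

Definition radial_factor (r : 'rV[R]_n -> R) :=
  [/\ smooth P r, forall x, x != 0 -> 0 < r x
    & forall (l : R) x, x != 0 -> l != 0 -> r (l *: x) = r x].

Section Radial.
Variable r : 'rV[R]_n -> R.
Hypothesis rr : radial_factor r.

Let r_gt0 x : x != 0 -> 0 < r x.
Proof. by case: rr => _ r_gt0 _; exact: r_gt0. Qed.

Let r_neq0 x : x != 0 -> r x != 0.
Proof. by move=> /r_gt0; rewrite lt0r => /andP[]. Qed.

Let r_scale (l : R) x : x != 0 -> l != 0 -> r (l *: x) = r x.
Proof. by case: rr => _ _ r_scale; exact: r_scale. Qed.

Lemma radial_factorV : radial_factor (fun x => (r x)^-1).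
Proof.
split=> [||l x x0 l0]; last by rewrite r_scale.
  by apply: (smooth_inv oP) => [|x x0]; [case: rr|exact: r_neq0].
by move=> x x0; rewrite invr_gt0 r_gt0.
Qed.

Lemma radial_neq0 x : x != 0 -> radial r x != 0.
Proof. by move=> x0; rewrite scaler_eq0 negb_or r_neq0. Qed.

Lemma radial_scale (l : R) x :
  x != 0 -> l != 0 -> radial r (l *: x) = l *: radial r x.
Proof. by move=> x0 l0; rewrite /radial r_scale // !scalerA mulrC. Qed.

Lemma radialVK x : x != 0 -> radial (fun y => (r y)^-1) (radial r x) = x.
Proof.
by move=> x0; rewrite /radial r_scale ?r_neq0 // scalerA mulVf ?r_neq0 // scale1r.
Qed.

Lemma smooth_radial : smooth P (radial r).
Proof. by apply: (smooth_scale oP); [case: rr|move=> k; exact: Ck_id]. Qed.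

End Radial.

Arguments radial_factorV {r}.

Lemma inN_radial (r : 'rV[R]_n -> R) : radial_factor r -> inN (radial r).
Proof.
move=> rr; have rrV := radial_factorV rr.
split; last by case: rr => sr r_gt0 r_scale; exists r; split; first exact/smooth_onE.
split; first exact: radial_neq0.
split; first exact/smooth_onE/smooth_radial.
split; last exact: radial_scale.
exists (radial (fun x => (r x)^-1)); split; first exact: radial_neq0.
split; first exact/smooth_onE/smooth_radial.
split=> x x0; first exact: radialVK.
have -> : radial r = radial (fun y => ((r y)^-1)^-1).
  by apply/funext => y; rewrite /radial invrK.
exact: radialVK.
Qed.

End GroupG.

Arguments radial_factorV {R n r}.
Arguments radial_scale {R n r}.
Arguments inN_radial {R n r}.

Section Decomposition.
Context {R : realType} {n : nat} (N : 'rV[R]_n -> R) (Y : 'rV[R]_n -> 'rV[R]_n).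
Hypotheses (normN : is_norm N) (sN : smooth_on (@punct R n) N) (GY : inG Y).
Local Notation P := (@punct R n).

Definition norm_ratio x := N (Y x) / N x.

Let Y_neq0 x : x != 0 -> Y x != 0.
Proof. by case: GY => Y0 _; exact: Y0. Qed.

Let Y_scale (l : R) x : x != 0 -> l != 0 -> Y (l *: x) = l *: Y x.
Proof. by case: GY => _ [_ [_ Yh]]; exact: Yh. Qed.

Let NS (a : R) x : N (a *: x) = `|a| * N x.
Proof. by case: normN => _ []. Qed.

Lemma norm_ratio_factor : radial_factor norm_ratio.
Proof.
have oP := open_punct R n.
split=> [||l x x0 l0].
- have /smooth_onE sN' := sN; have [_ [/smooth_onE sY _]] := GY.
  apply: (smooth_mul oP).
    by apply: (smooth_comp_scalar oP N sY (U' := P)) => // x; exact: Y_neq0.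
  by apply: (smooth_inv oP) => // x x0; rewrite gt_eqF ?(norm_gt0 normN).
- move=> x x0; apply: divr_gt0; apply: (norm_gt0 normN) => //.
  exact: Y_neq0.
- rewrite /norm_ratio Y_scale // !NS.
  by rewrite invfM mulrACA divff ?normr_eq0 // mul1r.
Qed.

Definition radial_part := radial norm_ratio.

Definition norm_part := Y \o radial (fun x => (norm_ratio x)^-1).

Lemma radial_part_inN : inN radial_part.
Proof. exact: inN_radial norm_ratio_factor. Qed.

Lemma norm_part_inH : inH N norm_part.
Proof.
have rrV := radial_factorV norm_ratio_factor.
have [Grv _] := inN_radial rrV.
split; first exact: inG_comp.
split=> x x0; rewrite /norm_part /=.
  have [_ ri_gt0 _] := rrV.
  rewrite /radial Y_scale ?gt_eqF ?ri_gt0 // NS gtr0_norm ?ri_gt0 //.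
  rewrite /norm_ratio invf_div divfK // gt_eqF //.
  by apply: (norm_gt0 normN); exact: Y_neq0.
have m1 : (-1 : R) != 0 by rewrite oppr_eq0 oner_eq0.
rewrite -scaleN1r (radial_scale rrV) // Y_scale //; last exact: radial_neq0.
by rewrite scaleN1r.
Qed.

Lemma norm_partK x : x != 0 -> Y x = norm_part (radial_part x).
Proof.
by move=> x0; rewrite /norm_part /= radialVK //; exact: norm_ratio_factor.
Qed.

Lemma radial_factor_unique h g : inH N h -> inN g ->
  (forall x, x != 0 -> Y x = h (g x)) -> forall x, x != 0 -> g x = radial_part x.
Proof.
move=> [_ [Nh _]] [[g0 _] [r [_ [r_gt0 [_ gr]]]]] Yhg x x0.
rewrite gr // /radial_part /radial; congr (_ *: _).
rewrite /norm_ratio Yhg // Nh ?g0 // gr // NS gtr0_norm ?r_gt0 //.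
by rewrite -mulrA divff ?mulr1 // gt_eqF ?(norm_gt0 normN).
Qed.

End Decomposition.

Arguments radial_factor_unique {R n N Y} normN {h g}.

Theorem proposition2 (R : realType) (n : nat) (N : 'rV[R]_n -> R) :
  (1 <= n)%N ->
  is_norm N ->
  smooth_on (@punct R n) N ->
  forall Y : 'rV[R]_n -> 'rV[R]_n, inG Y ->
    (exists h g : 'rV[R]_n -> 'rV[R]_n,
       inH N h /\ inN g /\ (forall x, x != 0 -> Y x = h (g x))) /\
    (forall h1 g1 h2 g2 : 'rV[R]_n -> 'rV[R]_n,
       inH N h1 -> inN g1 -> inH N h2 -> inN g2 ->
       (forall x, x != 0 -> Y x = h1 (g1 x)) ->
       (forall x, x != 0 -> Y x = h2 (g2 x)) ->
       (forall x, x != 0 -> h1 x = h2 x) /\ (forall x, x != 0 -> g1 x = g2 x)).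
Proof.
move=> _ normN sN Y GY; split.
  exists (norm_part N Y), (radial_part N Y); split; first exact: norm_part_inH.
  by split; [exact: radial_part_inN|exact: norm_partK].
move=> h1 g1 h2 g2 H1 G1 H2 G2 E1 E2.
have g12 x : x != 0 -> g1 x = g2 x.
  by move=> x0; rewrite (radial_factor_unique normN H1 G1 E1) //
    (radial_factor_unique normN H2 G2 E2).
split=> // x x0.
have [[_ [_ [[g1i [g1i0 [_ [_ g1K]]]] _]]] _] := G1.
have y0 := g1i0 x x0.
by rewrite -{1}(g1K x x0) -E1 // E2 // -g12 // g1K.
Qed.
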